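(* Let $\mathbb{C}$ be a small category, let $\theta\colon\mathbb{D}\to\mathbb{C}$ be an $n$-ary partial operation with domain the full subcategory $i\colon\mathbb{D}\hookrightarrow\mathbb{C}^n$, and let $\theta_j\colon\mathbb{D}_j\to\mathbb{C}$ be $k_j$-ary partial operations with domains $\mathbb{D}_j\subseteq\mathbb{C}^{k_j}$ full, for $j=1,\dots,n$. Suppose that $(\theta_1,\dots,\theta_n)\colon\mathbb{D}_1\times\cdots\times\mathbb{D}_n\to\mathbb{C}^n$ factors through $\mathbb{D}$, say as $i\circ(\theta_1,\dots,\theta_n)'$, so that the partial composite $\theta\circ(\theta_1,\dots,\theta_n)$, defined as the partial operation $\theta\circ(\theta_1,\dots,\theta_n)'\colon\mathbb{D}_1\times\cdots\times\mathbb{D}_n\to\mathbb{C}$ with domain $\mathbb{D}_1\times\cdots\times\mathbb{D}_n\subseteq\mathbb{C}^{k_1+\cdots+k_n}$, exists. Then there is a canonical natural isomorphism \[(\theta\circ(\theta_1,\dots,\theta_n))_D\cong\theta_D\circ((\theta_1)_D,\dots,(\theta_n)_D)\] of functors $[\mathbb{C}\to\mathbf{Set}]^{k_1+\cdots+k_n}\to[\mathbb{C}\to\mathbf{Set}]$.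
   Context: An $n$-ary partial operation $\theta\colon\mathbb{C}^n\rightharpoondown\mathbb{C}$ is a functor $\theta\colon\mathbb{D}\to\mathbb{C}$ where $\mathbb{D}$ is a full subcategory of $\mathbb{C}^n$. The Day extension of a partial operation $\theta\colon\mathbb{D}\to\mathbb{C}$ is the total functor $\theta_D\colon[\mathbb{C}\to\mathbf{Set}]^n\to[\mathbb{C}\to\mathbf{Set}]$, \[\theta_D(F_1,\dots,F_n)(a)=\int^{\vec d\in\mathbb{D}}\int^{\vec c\in\mathbb{C}^n}\mathbb{C}(\theta(\vec d),a)\times\mathbb{C}^n(\vec c,\vec d)\times\prod_{i=1}^n F_i(c_i),\] functorial in the $F_i$ via the induced maps on coends. *)

From Stdlib Require Import Relations ClassicalEpsilon.
From mathcomp Require Import ssreflect ssrfun ssrbool eqtype ssrnat fintype.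

Set Implicit Arguments.
Unset Strict Implicit.
Unset Printing Implicit Defensive.

Record Cat := {
  ob  : Type;
  hom : ob -> ob -> Type;
  idm : forall a, hom a a;
  cmp : forall a b c, hom b c -> hom a b -> hom a c }.

Arguments hom {c} a b : rename.
Arguments idm {c} a : rename.
Arguments cmp {c a b c0} g f : rename.

Definition is_cat (C : Cat) : Prop :=
  (forall a b : ob C, forall f : hom a b, cmp (idm b) f = f) /\
  (forall a b : ob C, forall f : hom a b, cmp f (idm a) = f) /\
  (forall a b c d : ob C, forall (f : hom a b) (g : hom b c) (h : hom c d),
      cmp h (cmp g f) = cmp (cmp h g) f).

Definition PowCat (C : Cat) (I : Type) : Cat :=
  {| ob := I -> ob C;
     hom := fun x y => forall i, hom (x i) (y i);
     idm := fun x i => idm (x i);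
     cmp := fun x y z g f i => cmp (g i) (f i) |}.

Definition FullSub (C : Cat) (P : ob C -> Prop) : Cat :=
  {| ob := {x : ob C | P x};
     hom := fun x y => hom (proj1_sig x) (proj1_sig y);
     idm := fun x => idm (proj1_sig x);
     cmp := fun x y z g f => cmp g f |}.

Arguments FullSub : clear implicits.

Record Functor (C D : Cat) := {
  fo : ob C -> ob D;
  fm : forall a b, hom a b -> hom (fo a) (fo b) }.
Arguments fm {C D} f {a b} f0 : rename.

Definition is_functor (C D : Cat) (F : Functor C D) : Prop :=
  (forall a, fm F (idm a) = idm (fo F a)) /\
  (forall a b c (f : hom a b) (g : hom b c),
      fm F (cmp g f) = cmp (fm F g) (fm F f)).

Definition compF (A B C : Cat) (G : Functor B C) (F : Functor A B) : Functor A C :=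
  {| fo := fun a => fo G (fo F a);
     fm := fun a b h => fm G (fm F h) |}.

Record PartialOp (C : Cat) (I : Type) := {
  pdom : (I -> ob C) -> Prop;
  pop  : Functor (FullSub (PowCat C I) pdom) C }.

Definition is_partial_op (C : Cat) (I : Type) (th : PartialOp C I) : Prop :=
  is_functor (pop th).

Record Copsh (C : Cat) := {
  ps0 : ob C -> Type;
  ps1 : forall a b, hom a b -> ps0 a -> ps0 b }.
Arguments ps1 {C} c {a b} h x : rename.

Definition is_copsh (C : Cat) (F : Copsh C) : Prop :=
  (forall a (x : ps0 F a), ps1 F (idm a) x = x) /\
  (forall a b c (f : hom a b) (g : hom b c) x,
      ps1 F (cmp g f) x = ps1 F g (ps1 F f x)).

Definition is_nat (C : Cat) (F G : Copsh C) (eta : forall a, ps0 F a -> ps0 G a) :=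
  forall a b (f : hom a b) x, eta b (ps1 F f x) = ps1 G f (eta a x).

Definition quot (T : Type) (R : T -> T -> Prop) : Type :=
  {Q : T -> Prop | exists t, Q = clos_refl_sym_trans T R t}.

Definition qcls (T : Type) (R : T -> T -> Prop) (t : T) : quot R :=
  exist _ (clos_refl_sym_trans T R t) (ex_intro _ t (erefl _)).

Definition qrep (T : Type) (R : T -> T -> Prop) (q : quot R) : T :=
  proj1_sig (constructive_indefinite_description _ (proj2_sig q)).

(* the map induced on quotients by f (meaningful when f respects R, R') *)
Definition qlift (T T' : Type) (R : T -> T -> Prop) (R' : T' -> T' -> Prop)
  (f : T -> T') (q : quot R) : quot R' := qcls R' (f (qrep q)).

Section Day.
Variables (C : Cat) (I : Type) (th : PartialOp C I).

Definition DomCat := FullSub (PowCat C I) (pdom th).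

Definition day_carrier (F : I -> Copsh C) (a : ob C) : Type :=
  { d : ob DomCat & { c : I -> ob C &
     (hom (fo (pop th) d) a * @hom (PowCat C I) c (proj1_sig d)
       * (forall i, ps0 (F i) (c i)))%type } }.

Definition day_mk (F : I -> Copsh C) (a : ob C) (d : ob DomCat) (c : I -> ob C)
  (u : hom (fo (pop th) d) a) (v : @hom (PowCat C I) c (proj1_sig d))
  (x : forall i, ps0 (F i) (c i)) : day_carrier F a :=
  existT _ d (existT _ c (u, v, x)).

(* generating relations of the (iterated) coend: dinaturality in d in D and
   dinaturality in c in C^I *)
Inductive day_rel (F : I -> Copsh C) (a : ob C) :
    day_carrier F a -> day_carrier F a -> Prop :=
| day_rel_D : forall (d d' : ob DomCat) (g : @hom DomCat d d') (c : I -> ob C)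
    (u : hom (fo (pop th) d') a) (v : @hom (PowCat C I) c (proj1_sig d))
    (x : forall i, ps0 (F i) (c i)),
    day_rel (day_mk (cmp u (fm (pop th) g)) v x)
            (day_mk u (@cmp (PowCat C I) _ _ _ g v) x)
| day_rel_C : forall (d : ob DomCat) (c c' : I -> ob C)
    (h : @hom (PowCat C I) c c')
    (u : hom (fo (pop th) d) a) (v : @hom (PowCat C I) c' (proj1_sig d))
    (x : forall i, ps0 (F i) (c i)),
    day_rel (day_mk u v (fun i => ps1 (F i) (h i) (x i)))
            (day_mk u (@cmp (PowCat C I) _ _ _ v h) x).

Definition day0 (F : I -> Copsh C) (a : ob C) : Type := quot (@day_rel F a).

Definition day1 (F : I -> Copsh C) (a b : ob C) (f : hom a b) :
    day0 F a -> day0 F b :=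
  @qlift _ _ (@day_rel F a) (@day_rel F b) (fun t : day_carrier F a =>
           let '(existT d (existT c (u, v, x))) := t in
           @day_mk F b d c (cmp f u) v x).

Definition day_obj (F : I -> Copsh C) : Copsh C :=
  {| ps0 := day0 F; ps1 := @day1 F |}.

Definition day_map (F G : I -> Copsh C)
    (eta : forall i a, ps0 (F i) a -> ps0 (G i) a) (a : ob C) :
    day0 F a -> day0 G a :=
  @qlift _ _ (@day_rel F a) (@day_rel G a) (fun t : day_carrier F a =>
           let '(existT d (existT c (u, v, x))) := t in
           @day_mk G a d c u v (fun i => eta i (c i) (x i))).
End Day.

Section Compose.
Variables (C : Cat) (n : nat) (k : 'I_n -> nat)
  (th : PartialOp C 'I_n) (ths : forall j : 'I_n, PartialOp C 'I_(k j)).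

(* index set of C^{k_1 + ... + k_n}, as the disjoint union of the 'I_(k j) *)
Definition SumIdx := {j : 'I_n & 'I_(k j)}.

Definition blk (A : Type) (x : SumIdx -> A) (j : 'I_n) : 'I_(k j) -> A :=
  fun t => x (existT _ j t).
Arguments blk {A} x j _.

Definition prod_dom (x : SumIdx -> ob C) : Prop :=
  forall j, pdom (ths j) (blk x j).

Definition factors : Prop :=
  forall (x : SumIdx -> ob C) (hx : prod_dom x),
    pdom th (fun j => fo (pop (ths j)) (exist _ (blk x j) (hx j))).

Variable hfac : factors.

Definition ProdDomCat := FullSub (PowCat C SumIdx) prod_dom.
Definition ThDomCat := FullSub (PowCat C 'I_n) (pdom th).

Definition tuple_fo (x : ob ProdDomCat) : ob ThDomCat :=
  exist _ (fun j => fo (pop (ths j)) (exist _ (blk (proj1_sig x) j) (proj2_sig x j)))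
          (hfac (proj2_sig x)).

Definition tuple_fm (x y : ob ProdDomCat) (h : hom x y) :
    hom (tuple_fo x) (tuple_fo y) :=
  fun j => @fm _ _ (pop (ths j))
             (exist _ (blk (proj1_sig x) j) (proj2_sig x j))
             (exist _ (blk (proj1_sig y) j) (proj2_sig y j))
             (fun t => h (existT _ j t)).

Definition tuple_op : Functor ProdDomCat ThDomCat :=
  {| fo := tuple_fo; fm := tuple_fm |}.

Definition comp_op : PartialOp C SumIdx :=
  {| pdom := prod_dom; pop := compF (pop th) tuple_op |}.

Definition dayR0 (F : SumIdx -> Copsh C) (a : ob C) : Type :=
  day0 th (fun j => day_obj (ths j) (blk F j)) a.

Definition dayR1 (F : SumIdx -> Copsh C) (a b : ob C) (f : hom a b) :
    dayR0 F a -> dayR0 F b :=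
  @day1 C _ th (fun j => day_obj (ths j) (blk F j)) a b f.

Definition dayR_map (F G : SumIdx -> Copsh C)
    (eta : forall s a, ps0 (F s) a -> ps0 (G s) a) (a : ob C) :
    dayR0 F a -> dayR0 G a :=
  @day_map C _ th (fun j => day_obj (ths j) (blk F j))
                  (fun j => day_obj (ths j) (blk G j))
     (fun j => @day_map C _ (ths j) (blk F j) (blk G j)
                  (fun t => eta (existT _ j t))) a.
End Compose.

(* An element of the coend defining (theta o (theta_1, ..., theta_n))_D (F) (a) is a tuple
   (x, c, u, v, y) with x in D_1 x ... x D_n.  Cutting it into blocks gives the element
   (theta' x, (theta_j x_j)_j, u, id, ([x_j, c_j, id, v_j, y_j])_j) of the iterated coend
   ([day_nest]).  Conversely, picking representatives (d_j, c_j, u_j, v_j, y_j) of the inner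
   classes of an iterated element (d, e, u, v, z) and concatenating them gives
   ((d_j)_j, (c_j)_j, u o theta (v_j o u_j)_j, (v_j)_j, (y_j)_j) ([day_unnest]).  Both maps
   respect the generating relations of the coends; for [day_unnest] the choice of
   representatives is changed one block at a time.  Each composite sends an element to one
   joined to it by a morphism of elements built from identities, hence to the same class. *)

From mathcomp Require Import ssreflect ssrfun ssrbool eqtype ssrnat fintype.
From Stdlib Require Import Relations ClassicalEpsilon FunctionalExtensionality
  PropExtensionality ProofIrrelevance.

Set Implicit Arguments.
Unset Strict Implicit.
Unset Printing Implicit Defensive.

Notation crst := clos_refl_sym_trans.

Lemma dependent_choice (A : Type) (B : A -> Type) (Q : forall x, B x -> Prop) :
  (forall x, exists y, Q x y) -> exists f : forall x, B x, forall x, Q x (f x).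
Proof.
move=> H; exists (fun x => proj1_sig (constructive_indefinite_description _ (H x))).
by move=> x; case: (constructive_indefinite_description _ _).
Qed.

Lemma dependent_choice2 (A : Type) (B : A -> Type) (B' : forall x, B x -> Type)
    (Q : forall x y, B' x y -> Prop) :
  (forall x, exists y z, Q x y z) ->
  exists (f : forall x, B x) (g : forall x, B' x (f x)), forall x, Q x (f x) (g x).
Proof.
move=> H; have [f Hf] := dependent_choice H.
by have [g Hg] := dependent_choice Hf; exists f, g.
Qed.

Lemma dfwith_id (I : eqType) (T : I -> Type) (f : forall i, T i) (i : I) :
  dfwith f (f i) = f.
Proof. by apply: functional_extensionality_dep => j; case: dfwithP. Qed.

Section Quotient.
Variables (T : Type) (R : T -> T -> Prop).

Lemma qcls_eq t t' : crst T R t t' -> qcls R t = qcls R t'.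
Proof.
move=> Htt'; apply: subset_eq_compat.
apply: functional_extensionality => s; apply: propositional_extensionality.
by split => Hs; [apply: rst_trans (rst_sym _ _ _ _ Htt') Hs | apply: rst_trans Htt' Hs].
Qed.

Lemma qrep_spec (q : quot R) : proj1_sig q = crst T R (qrep q).
Proof. by rewrite /qrep; case: (constructive_indefinite_description _ _). Qed.

Lemma qcls_qrep (q : quot R) : qcls R (qrep q) = q.
Proof. by case: q => Q HQ; apply: subset_eq_compat; rewrite -(qrep_spec (exist _ Q HQ)). Qed.

Lemma qrep_qcls t : crst T R t (qrep (qcls R t)).
Proof. by have /= -> := qrep_spec (qcls R t); apply: rst_refl. Qed.

End Quotient.

Lemma crst_map (T T' : Type) (R : T -> T -> Prop) (R' : T' -> T' -> Prop) (f : T -> T') :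
  (forall x y, R x y -> crst T' R' (f x) (f y)) ->
  forall x y, crst T R x y -> crst T' R' (f x) (f y).
Proof.
move=> Hf x y; elim=> {x y} [x y /Hf //|x|x y _ IH|x y z _ IH1 _ IH2].
- exact: rst_refl.
- exact: rst_sym.
- exact: rst_trans IH1 IH2.
Qed.

Lemma qlift_cls (T T' : Type) (R : T -> T -> Prop) (R' : T' -> T' -> Prop) (f : T -> T') t :
  (forall x y, R x y -> crst T' R' (f x) (f y)) ->
  qlift R' f (qcls R t) = qcls R' (f t).
Proof.
move=> Hf; apply: qcls_eq; apply: rst_sym; apply: crst_map Hf _ _ _; exact: qrep_qcls.
Qed.

Section DayElements.
Variables (C : Cat) (I : Type) (P : PartialOp C I).

Section Fixed.
Variables (F : I -> Copsh C) (a : ob C).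

Definition el_d (t : day_carrier P F a) : ob (DomCat P) := projT1 t.
Definition el_c (t : day_carrier P F a) : I -> ob C := projT1 (projT2 t).
Definition el_u (t : day_carrier P F a) : hom (fo (pop P) (el_d t)) a :=
  (projT2 (projT2 t)).1.1.
Definition el_v (t : day_carrier P F a) : @hom (PowCat C I) (el_c t) (proj1_sig (el_d t)) :=
  (projT2 (projT2 t)).1.2.
Definition el_x (t : day_carrier P F a) : forall i, ps0 (F i) (el_c t i) :=
  (projT2 (projT2 t)).2.

(* A morphism (g, h) from t1 to t2 in the category of elements of the coend integrand;
   such morphisms generate the identifications of the coend. *)
Definition day_arrow (t1 t2 : day_carrier P F a) : Prop :=
  exists (g : @hom (DomCat P) (el_d t1) (el_d t2))
         (h : @hom (PowCat C I) (el_c t1) (el_c t2)),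
    el_u t1 = cmp (el_u t2) (fm (pop P) g) /\
    (forall i, cmp (g i) (el_v t1 i) = cmp (el_v t2 i) (h i)) /\
    (forall i, el_x t2 i = ps1 (F i) (h i) (el_x t1 i)).

Lemma day_arrow_crst t1 t2 : day_arrow t1 t2 -> crst _ (@day_rel C I P F a) t1 t2.
Proof.
case: t1 => d1 [c1 [[u1 v1] x1]]; case: t2 => d2 [c2 [[u2 v2] x2]].
move=> [g [h [Hu [Hv Hx]]]]; rewrite /el_u /el_v /el_x /= in Hu Hv Hx; rewrite Hu.
apply: (rst_trans _ _ _ (day_mk u2 (@cmp (PowCat C I) _ _ _ g v1) x1)).
  exact/rst_step/day_rel_D.
have -> : @cmp (PowCat C I) _ _ _ g v1 = @cmp (PowCat C I) _ _ _ v2 h.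
  exact: functional_extensionality_dep.
have -> : x2 = (fun i => ps1 (F i) (h i) (x1 i)) by exact: functional_extensionality_dep.
exact/rst_sym/rst_step/day_rel_C.
Qed.

Lemma crst_day_mk d1 c1 u1 v1 x1 d2 c2 u2 v2 x2
    (g : @hom (DomCat P) d1 d2) (h : @hom (PowCat C I) c1 c2) :
  u1 = cmp u2 (fm (pop P) g) -> (forall i, cmp (g i) (v1 i) = cmp (v2 i) (h i)) ->
  (forall i, x2 i = ps1 (F i) (h i) (x1 i)) ->
  crst _ (@day_rel C I P F a) (@day_mk C I P F a d1 c1 u1 v1 x1) (day_mk u2 v2 x2).
Proof. by move=> Hu Hv Hx; apply: day_arrow_crst; exists g, h. Qed.

Hypotheses (hC : is_cat C) (hP : is_partial_op P) (hF : forall i, is_copsh (F i)).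

Lemma day_arrow_refl t : day_arrow t t.
Proof.
have [hl [hr _]] := hC; have [hid _] := hP.
exists (@idm (DomCat P) (el_d t)), (@idm (PowCat C I) (el_c t)).
split; first by rewrite hid hr.
by split=> i /=; rewrite ?hl ?hr ?(proj1 (hF i)).
Qed.

Lemma day_rel_arrow t1 t2 : @day_rel C I P F a t1 t2 -> day_arrow t1 t2 \/ day_arrow t2 t1.
Proof.
have [hl [hr _]] := hC; have [hid _] := hP.
case=> [d d' g c u v x | d c c' h u v x].
- left; exists g, (@idm (PowCat C I) c).
  by split=> //; split=> i /=; rewrite ?hr ?(proj1 (hF i)).
- right; exists (@idm (DomCat P) d), h.
  by split=> /=; [rewrite hid hr | split=> i //=; rewrite hl].
Qed.

End Fixed.

Definition day_post F a b (f : hom a b) (t : day_carrier P F a) : day_carrier P F b :=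
  day_mk (cmp f (el_u t)) (el_v t) (el_x t).

Definition day_elt_map F G (eta : forall i a, ps0 (F i) a -> ps0 (G i) a) a
    (t : day_carrier P F a) : day_carrier P G a :=
  day_mk (el_u t) (el_v t) (fun i => eta i _ (el_x t i)).

Lemma day1_cls (hC : is_cat C) F a b (f : hom a b) (t : day_carrier P F a) :
  day1 f (qcls _ t) = qcls _ (day_post f t).
Proof.
have [_ [_ hA]] := hC.
rewrite /day1 qlift_cls; first by case: t => d [c [[u v] x]].
move=> _ _ [d d' g c u v x | d c c' h u v x] /=; apply: rst_step.
- rewrite hA; exact: day_rel_D.
- exact: day_rel_C.
Qed.

Lemma day_map_cls F G (eta : forall i a, ps0 (F i) a -> ps0 (G i) a) a
    (t : day_carrier P F a) :
  (forall i, is_nat (eta i)) -> day_map eta (qcls _ t) = qcls _ (day_elt_map eta t).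
Proof.
move=> Heta; rewrite /day_map qlift_cls; first by case: t => d [c [[u v] x]].
move=> _ _ [d d' g c u v x | d c c' h u v x] /=; apply: rst_step.
- exact: day_rel_D.
- have -> : (fun i => eta i (c' i) (ps1 (F i) (h i) (x i))) =
            (fun i => ps1 (G i) (h i) (eta i (c i) (x i))).
    by apply: functional_extensionality_dep => i; rewrite Heta.
  exact: day_rel_C.
Qed.

End DayElements.

Arguments el_d [C I P F a] t /.
Arguments el_c [C I P F a] t /.
Arguments el_u [C I P F a] t /.
Arguments el_v [C I P F a] t /.
Arguments el_x [C I P F a] t /.

Lemma day_map_is_nat (C : Cat) (I : Type) (P : PartialOp C I) (hC : is_cat C) F G
    (eta : forall i a, ps0 (F i) a -> ps0 (G i) a) :
  (forall i, is_nat (eta i)) -> @is_nat C (day_obj P F) (day_obj P G) (day_map eta).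
Proof.
move=> Heta a b f q; rewrite -(qcls_qrep q) /=.
by rewrite day1_cls // !day_map_cls // day1_cls.
Qed.

Section Composite.
Variables (C : Cat) (hC : is_cat C) (n : nat) (k : 'I_n -> nat)
  (th : PartialOp C 'I_n) (hth : is_partial_op th)
  (ths : forall j : 'I_n, PartialOp C 'I_(k j)) (hths : forall j, is_partial_op (ths j))
  (hfac : factors th ths).

Notation block x j := (@blk _ _ _ x j).

Definition blk_obj (x : ob (ProdDomCat ths)) (j : 'I_n) : ob (DomCat (ths j)) :=
  exist _ (block (proj1_sig x) j) (proj2_sig x j).

Definition inner_day (F : SumIdx k -> Copsh C) (j : 'I_n) : Copsh C :=
  day_obj (ths j) (block F j).

Section Nest.
Variables (F : SumIdx k -> Copsh C) (a : ob C).

Definition nest_block (t : day_carrier (comp_op hfac) F a) (j : 'I_n) :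
    day_carrier (ths j) (block F j) (fo (pop (ths j)) (blk_obj (el_d t) j)) :=
  @day_mk C _ (ths j) (block F j) _ (blk_obj (el_d t) j) (block (el_c t) j)
    (idm _) (fun l => el_v t (existT _ j l)) (fun l => el_x t (existT _ j l)).

Definition nest_elt (t : day_carrier (comp_op hfac) F a) : day_carrier th (inner_day F) a :=
  @day_mk C _ th (inner_day F) a (tuple_fo hfac (el_d t)) _
    (el_u t) (fun j => idm _) (fun j => qcls _ (nest_block t j)).

Lemma nest_elt_resp t t' : day_rel t t' ->
  crst _ (@day_rel C _ th (inner_day F) a) (nest_elt t) (nest_elt t').
Proof.
have [hl [hr _]] := hC; have [hid _] := hth.
case=> [x x' g c u v y | x c c' h u v y]; apply: day_arrow_crst.
- exists (tuple_fm hfac g), (tuple_fm hfac g); split=> //; split=> j /=.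
    by rewrite hl hr.
  rewrite day1_cls //; apply/qcls_eq/rst_sym/rst_step; rewrite /day_post /nest_block /= hr.
  rewrite -[tuple_fm _ _ _]hl; exact: day_rel_D.
- exists (@idm (ThDomCat th) _), (@idm (PowCat C 'I_n) _); split=> /=.
    by rewrite hid hr.
  split=> j //=.
  rewrite day1_cls //; apply/qcls_eq/rst_sym/rst_step; rewrite /day_post /nest_block /= hl.
  exact: (day_rel_C (fun l => h (existT _ j l))).
Qed.

Definition day_nest : day0 (comp_op hfac) F a -> dayR0 th ths F a :=
  qlift _ nest_elt.

Lemma day_nest_cls t : day_nest (qcls _ t) = qcls _ (nest_elt t).
Proof. exact/qlift_cls/nest_elt_resp. Qed.

End Nest.

Section Flatten.
Variables (F : SumIdx k -> Copsh C) (a : ob C) (d : ob (ThDomCat th)) (e : 'I_n -> ob C)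
  (u : hom (fo (pop th) d) a) (v : forall j, hom (e j) (proj1_sig d j)).

Local Notation reps := (forall j, day_carrier (ths j) (block F j) (e j)).

Definition flat_d (r : reps) : ob (ProdDomCat ths) :=
  exist (prod_dom ths) (fun s => proj1_sig (el_d (r (projT1 s))) (projT2 s))
    (fun j => proj2_sig (el_d (r j))).

(* The identity of [el_d (r j)], retyped: sigma types have no definitional eta, so
   [blk_obj (flat_d r) j] and [el_d (r j)] are only propositionally equal. *)
Definition flat_iota (r : reps) j :
    @hom (DomCat (ths j)) (blk_obj (flat_d r) j) (el_d (r j)) :=
  @idm (DomCat (ths j)) (el_d (r j)).

Definition flat_w (r : reps) : @hom (ThDomCat th) (tuple_fo hfac (flat_d r)) d :=
  fun j => cmp (v j) (cmp (el_u (r j)) (fm (pop (ths j)) (@flat_iota r j))).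

Definition flat_c (r : reps) : SumIdx k -> ob C := fun s => el_c (r (projT1 s)) (projT2 s).

Definition flat_x (r : reps) : forall s, ps0 (F s) (flat_c r s) :=
  fun s => match s with existT j l => el_x (r j) l end.

Definition flatten_elt (r : reps) : day_carrier (comp_op hfac) F a :=
  @day_mk C _ (comp_op hfac) F a (flat_d r) (flat_c r) (cmp u (fm (pop th) (flat_w r)))
    (fun s => el_v (r (projT1 s)) (projT2 s)) (flat_x r).

Lemma flatten_arrow (r r' : reps) : (forall j, day_arrow (r j) (r' j)) ->
  day_arrow (flatten_elt r) (flatten_elt r').
Proof.
have [hl [hr hA]] := hC; have [_ hcmp] := hth.
move=> /dependent_choice2 [g [h Hgh]].
exists (fun s => g (projT1 s) (projT2 s)), (fun s => h (projT1 s) (projT2 s)).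
split; last split; last first.
- by case=> j l; case: (Hgh j) => _ [_]; apply.
- by case=> j l; case: (Hgh j) => _ [+ _]; apply.
rewrite /= -hA -hcmp; congr (cmp u (fm _ _)).
apply: functional_extensionality_dep => j /=.
have [Hu _] := Hgh j; have [_ hcmpj] := hths j.
rewrite /flat_w Hu -!hA -!hcmpj; congr (cmp (v j) (cmp _ (fm _ _))).
by apply: functional_extensionality_dep => l /=; rewrite hl hr.
Qed.

Hypothesis hF : forall s, is_copsh (F s).

Lemma flatten_crst_dfwith (r : reps) j (t t' : day_carrier (ths j) (block F j) (e j)) :
  crst _ (@day_rel C _ (ths j) (block F j) (e j)) t t' ->
  crst _ (@day_rel C _ (comp_op hfac) F a)
    (flatten_elt (dfwith r t)) (flatten_elt (dfwith r t')).
Proof.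
have arrow_at (t1 t2 : day_carrier (ths j) (block F j) (e j)) : day_arrow t1 t2 ->
    day_arrow (flatten_elt (dfwith r t1)) (flatten_elt (dfwith r t2)).
  move=> H12; apply: flatten_arrow => i.
  case: (eqVneq j i) => [<-|ne]; first by rewrite !dfwith_in.
  by rewrite !dfwith_out //; apply: day_arrow_refl => // l; apply: hF.
elim=> {t t'} [t t' | t | t t' _ IH | t t' t'' _ IH1 _ IH2].
- case/(day_rel_arrow hC (hths j) (fun l => hF _)) => /arrow_at/day_arrow_crst //.
  exact: rst_sym.
- exact: rst_refl.
- exact: rst_sym.
- exact: rst_trans IH1 IH2.
Qed.

Lemma flatten_crst (r r' : reps) :
  (forall j, crst _ (@day_rel C _ (ths j) (block F j) (e j)) (r j) (r' j)) ->
  crst _ (@day_rel C _ (comp_op hfac) F a) (flatten_elt r) (flatten_elt r').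
Proof.
move=> Hr; pose mix m := fun j : 'I_n => if j < m then r' j else r j.
have Hmix m : m <= n ->
    crst _ (@day_rel C _ (comp_op hfac) F a) (flatten_elt r) (flatten_elt (mix m)).
  elim: m => [_ | m IH ltmn].
    have -> : mix 0 = r by exact: functional_extensionality_dep.
    exact: rst_refl.
  apply: rst_trans (IH (ltnW ltmn)) _; pose j0 := Ordinal ltmn.
  have -> : mix m.+1 = dfwith (mix m) (r' j0).
    apply: functional_extensionality_dep => j.
    case: dfwithP => [|i ne]; first by rewrite /mix ltnSn.
    have /negbTE Him : nat_of_ord i != m by rewrite eq_sym; exact: ne.
    by rewrite /mix ltnS leq_eqVlt Him.
  have := @flatten_crst_dfwith (mix m) j0 (mix m j0) (r' j0); rewrite dfwith_id; apply.
  by rewrite /mix ltnn; apply: Hr.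
have -> : r' = mix n by apply: functional_extensionality_dep => j; rewrite /mix ltn_ord.
exact: Hmix.
Qed.

End Flatten.

Section Unnest.
Variables (F : SumIdx k -> Copsh C) (a : ob C).
Hypothesis hF : forall s, is_copsh (F s).

Definition unnest_elt (o : day_carrier th (inner_day F) a) : day_carrier (comp_op hfac) F a :=
  flatten_elt (el_u o) (el_v o) (fun j => qrep (el_x o j)).

Lemma unnest_elt_resp o o' : day_rel o o' ->
  crst _ (@day_rel C _ (comp_op hfac) F a) (unnest_elt o) (unnest_elt o').
Proof.
have [hl [hr hA]] := hC; have [hid hcmp] := hth.
case=> [d d' g e u v z | d e e' h u v z].
- rewrite [X in crst _ _ X _](_ : _ =
      unnest_elt (day_mk u (@cmp (PowCat C 'I_n) _ _ _ g v) z)); first exact: rst_refl.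
  rewrite /unnest_elt /flatten_elt /= -hA -hcmp; do 3 f_equal.
  by apply: functional_extensionality_dep => j; rewrite /flat_w /= !hA.
- apply: rst_trans (flatten_crst _ _ hF (r' := fun j => day_post (h j) (qrep (z j))) _) _.
    move=> j; rewrite /= -{1}(qcls_qrep (z j)) day1_cls //; exact/rst_sym/qrep_qcls.
  rewrite [X in crst _ _ X _](_ : _ =
      unnest_elt (day_mk u (@cmp (PowCat C 'I_n) _ _ _ v h) z)); first exact: rst_refl.
  rewrite /unnest_elt /flatten_elt /=; do 3 f_equal.
  by apply: functional_extensionality_dep => j; rewrite /flat_w /= !hA.
Qed.

Definition day_unnest : dayR0 th ths F a -> day0 (comp_op hfac) F a :=
  qlift _ unnest_elt.

Lemma day_unnest_cls o : day_unnest (qcls _ o) = qcls _ (unnest_elt o).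
Proof. exact/qlift_cls/unnest_elt_resp. Qed.

End Unnest.

Section Iso.
Variables (F : SumIdx k -> Copsh C) (a : ob C).
Hypothesis hF : forall s, is_copsh (F s).

Lemma day_unnest_nest (x : day0 (comp_op hfac) F a) : day_unnest (day_nest x) = x.
Proof.
have [hl [hr _]] := hC.
rewrite -(qcls_qrep x) day_nest_cls day_unnest_cls //; apply: qcls_eq.
move: (qrep x) => t; apply: rst_trans (flatten_crst _ _ hF (r' := nest_block t) _) _.
  by move=> j; apply/rst_sym/qrep_qcls.
case: t => [[x0 hx0] [c [[u v] y]]].
unshelve eapply crst_day_mk.
- by case=> j l; apply: idm.
- by case=> j l; apply: idm.
- change (fm (pop (comp_op hfac)) ?g) with (fm (pop th) (tuple_fm hfac g)) => /=.
  do 2 f_equal; apply: functional_extensionality_dep => j.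
  by rewrite /flat_w /= !hl.
- by case=> j l /=; rewrite hl hr.
- by case=> j l /=; rewrite (proj1 (hF _)).
Qed.

Lemma day_nest_unnest (y : dayR0 th ths F a) : day_nest (day_unnest y) = y.
Proof.
have [hl [hr _]] := hC.
rewrite -(qcls_qrep y) day_unnest_cls // day_nest_cls; apply: qcls_eq.
case: (qrep y) => d [e [[u v] z]]; set r := fun j => qrep (z j).
unshelve eapply (crst_day_mk (g := flat_w v r)).
- exact (fun j => cmp (el_u (r j)) (fm (pop (ths j)) (@flat_iota _ _ r j))).
- by [].
- by move=> j; rewrite hr.
- move=> j /=; rewrite day1_cls // -{1}(qcls_qrep (z j)); apply/qcls_eq/rst_sym/day_arrow_crst.
  exists (@flat_iota _ _ r j), (@idm (PowCat C _) (el_c (r j))).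
  split=> /=; first by rewrite hr.
  by split=> l /=; rewrite ?hl ?hr ?(proj1 (hF _)).
Qed.

End Iso.

Lemma day_nest_natural F a b (f : hom a b) (x : day0 (comp_op hfac) F a) :
  day_nest (day1 f x) = @dayR1 C n k th ths F a b f (day_nest x).
Proof. by rewrite -(qcls_qrep x) day1_cls // !day_nest_cls /dayR1 day1_cls. Qed.

Lemma day_nest_map F G (eta : forall s a, ps0 (F s) a -> ps0 (G s) a) a
    (x : day0 (comp_op hfac) F a) :
  (forall s, is_nat (eta s)) ->
  day_nest (day_map eta x) = @dayR_map C n k th ths F G eta a (day_nest x).
Proof.
move=> Heta; rewrite -(qcls_qrep x) day_map_cls // !day_nest_cls /dayR_map day_map_cls;
  last by move=> j; apply: day_map_is_nat => // l; apply: Heta.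
congr (qcls _ (day_mk _ _ _)); apply: functional_extensionality_dep => j.
by rewrite day_map_cls // => l; apply: Heta.
Qed.

End Composite.

Theorem lemma3p7 (C : Cat) (hC : is_cat C) (n : nat) (k : 'I_n -> nat)
  (th : PartialOp C 'I_n) (hth : is_partial_op th)
  (ths : forall j : 'I_n, PartialOp C 'I_(k j))
  (hths : forall j, is_partial_op (ths j))
  (hfac : factors th ths) :
  exists (alpha : forall (F : SumIdx k -> Copsh C) (a : ob C),
                    day0 (comp_op hfac) F a -> dayR0 th ths F a)
         (beta  : forall (F : SumIdx k -> Copsh C) (a : ob C),
                    dayR0 th ths F a -> day0 (comp_op hfac) F a),
    (forall F, (forall s, is_copsh (F s)) -> forall a,
        (forall x, beta F a (alpha F a x) = x) /\
        (forall y, alpha F a (beta F a y) = y)) /\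
    (forall F, (forall s, is_copsh (F s)) -> forall a b (f : hom a b) x,
        alpha F b (@day1 C _ (comp_op hfac) F a b f x) =
          @dayR1 C n k th ths F a b f (alpha F a x)) /\
    (forall F G, (forall s, is_copsh (F s)) -> (forall s, is_copsh (G s)) ->
     forall (eta : forall s a, ps0 (F s) a -> ps0 (G s) a),
       (forall s, is_nat (eta s)) ->
       forall a x,
         alpha G a (@day_map C _ (comp_op hfac) F G eta a x) =
           @dayR_map C n k th ths F G eta a (alpha F a x)).
Proof.
exists (fun F a => @day_nest C n k th ths hfac F a).
exists (fun F a => @day_unnest C n k th ths hfac F a).
split; [|split].
- move=> F hF a; split.
  + exact: day_unnest_nest.
  + exact: day_nest_unnest.
- by move=> F _ a b f x; apply: day_nest_natural.
- by move=> F G _ _ eta Heta a x; apply: day_nest_map.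
Qed.
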